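(* Let $\mathcal{G}$ be a connected $k$-uniform hypergraph with $n$ vertices. Then \[ {\rm diam}(\mathcal{G})\geq\frac{k}{2(k-1)(n-1)\alpha(\mathcal{G})},\qquad {\rm rad}(\mathcal{G})\geq\frac{k}{2(k-1)(n-1)\beta(\mathcal{G})}. \]
   Context: A $k$-uniform hypergraph $\mathcal{G}$ has vertex set $V(\mathcal{G})=[n]$ and edge set $E(\mathcal{G})$ of $k$-element subsets of $V(\mathcal{G})$. A path of length $l$ is an alternating sequence $v_0e_1v_1\cdots e_lv_l$ of distinct vertices and distinct edges with $v_{i-1},v_i\in e_i$; $\mathcal{G}$ is connected if any two vertices are joined by a path. The distance $d(u,v)$ is the length of a shortest path between $u$ and $v$, ${\rm ecc}(v)=\max_{u}d(u,v)$, ${\rm diam}(\mathcal{G})=\max_v{\rm ecc}(v)$, ${\rm rad}(\mathcal{G})=\min_v{\rm ecc}(v)$. For $\mathbf{x}\in\mathbb{R}^n$, $\mathcal{L}_\mathcal{G}\mathbf{x}^k=\sum_{\{i_1,\ldots,i_k\}\in E(\mathcal{G})}\left(x_{i_1}^k+\cdots+x_{i_k}^k-k\,x_{i_1}\cdots x_{i_k}\right)$; the inverse Perron value of vertex $j$ is $\alpha_j(\mathcal{G})=\min\{\mathcal{L}_\mathcal{G}\mathbf{x}^k : \mathbf{x}\in\mathbb{R}^n_+,\ \sum_i x_i^k=1,\ x_j=0\}$; $\alpha(\mathcal{G})=\min_j\alpha_j(\mathcal{G})$ and $\beta(\mathcal{G})=\max_j\alpha_j(\mathcal{G})$. *)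

From mathcomp Require Import all_boot all_order all_algebra.
From mathcomp Require Import all_classical all_reals.
Set Implicit Arguments. Unset Strict Implicit. Unset Printing Implicit Defensive.
Import Order.TTheory GRing.Theory Num.Theory.

Definition k_uniform (n k : nat) (E : {set {set 'I_n}}) : Prop :=
  forall e, e \in E -> #|e| = k.

(* A path of length l from u to v: v_0 e_1 v_1 ... e_l v_l with distinct
   vertices vs = [v_0;...;v_l] and distinct edges es = [e_1;...;e_l] of E,
   with v_{i-1}, v_i in e_i. *)
Definition is_path (n : nat) (E : {set {set 'I_n}}) (u v : 'I_n) (l : nat)
    (vs : seq 'I_n) (es : seq {set 'I_n}) : Prop :=
  [/\ size es = l, size vs = l.+1, uniq vs & uniq es] /\
  [/\ all (fun e => e \in E) es, head u vs = u, last u vs = v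
    & forall i, (i < l)%N ->
        nth u vs i \in nth finset.set0 es i /\ nth u vs i.+1 \in nth finset.set0 es i].

Definition has_path (n : nat) (E : {set {set 'I_n}}) (u v : 'I_n) (l : nat) : Prop :=
  exists vs es, is_path E u v l vs es.

Definition connected_hg (n : nat) (E : {set {set 'I_n}}) : Prop :=
  forall u v : 'I_n, exists l, has_path E u v l.

(* d(u,v): the length of a shortest path between u and v (0 if none exists,
   which never happens for connected hypergraphs). *)
Definition hdist (n : nat) (E : {set {set 'I_n}}) (u v : 'I_n) : nat :=
  match pselect (exists l, `[< has_path E u v l >]) with
  | left H => ex_minn H
  | right _ => 0%N
  end.

Definition ecc (n : nat) (E : {set {set 'I_n}}) (v : 'I_n) : nat :=
  \max_(u : 'I_n) hdist E u v.

Definition hg_diam (n : nat) (E : {set {set 'I_n}}) : nat :=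
  \max_(v : 'I_n) ecc E v.

(* hg_rad = min_v ecc(v)  (the neutral element hg_diam is >= every ecc(v), so this
   is exactly the minimum over the nonempty vertex set) *)
Definition hg_rad (n : nat) (E : {set {set 'I_n}}) : nat :=
  \big[minn/hg_diam E]_(v : 'I_n) ecc E v.

Local Open Scope ring_scope.

Definition lapl_form (R : realType) (n k : nat) (E : {set {set 'I_n}})
    (x : 'I_n -> R) : R :=
  \sum_(e in E) (\sum_(i in e) x i ^+ k - k%:R * \prod_(i in e) x i).

(* alpha_j(G) = min { L_G x^k : x >= 0, sum_i x_i^k = 1, x_j = 0 }
   (the minimum exists by compactness; we write it as the infimum). *)
Definition alpha_j (R : realType) (n k : nat) (E : {set {set 'I_n}}) (j : 'I_n) : R :=
  inf [set lapl_form k E x | x in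
        [set x : 'I_n -> R | (forall i, 0 <= x i) /\
                              \sum_(i < n) x i ^+ k = 1 /\ x j = 0]].

Definition alpha_hg (R : realType) (n k : nat) (E : {set {set 'I_n}}) : R :=
  inf (range (alpha_j R k E)).
Definition beta_hg (R : realType) (n k : nat) (E : {set {set 'I_n}}) : R :=
  sup (range (alpha_j R k E)).

From mathcomp Require Import all_boot all_order all_algebra.
From mathcomp Require Import all_classical all_reals.
From mathcomp Require Import ring lra.

(* Fix j and a feasible x (x >= 0, sum_i x_i^k = 1, x_j = 0), put
   y_i = sqrt (x_i^k) and let u maximise x_i^k, so that
   1 = sum_(i != j) x_i^k <= (n - 1) y_u^2.  For two distinct vertices a, b of
   an edge e, AM-GM shows that the term of e in L_G x^k is at least
   (y_a - y_b)^2.  Telescoping along a shortest path from u to j and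
   Cauchy-Schwarz then give y_u^2 <= d(u, j) L_G x^k, whence
   1 <= (n - 1) ecc(j) alpha_j(G).  Taking j arbitrary (resp. a centre) gives
   both bounds, since k / (2 (k - 1)) <= 1 for k >= 2. *)

Set Implicit Arguments.
Unset Strict Implicit.
Unset Printing Implicit Defensive.
Import Order.TTheory GRing.Theory Num.Theory.
Local Open Scope ring_scope.

Section RealInequalities.
Variable R : realDomainType.

Lemma sqr_sum_le_size_mul (I : Type) (s : seq I) (F : I -> R) :
  (\sum_(i <- s) F i) ^+ 2 <= (size s)%:R * \sum_(i <- s) F i ^+ 2.
Proof.
elim: s => [|a s IH]; first by rewrite !big_nil expr0n mul0r.
rewrite !big_cons /= -natr1.
move: IH; set S := \sum_(i <- s) F i; set Q := \sum_(i <- s) F i ^+ 2 => IH.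
have [/size0nil s0|m_gt0] := posnP (size s).
  by rewrite /S /Q s0 !big_nil /= add0r !addr0 mul1r.
rewrite -(ltr0n R) in m_gt0.
have Q_ge0 : 0 <= Q by rewrite sumr_ge0 // => i _; rewrite sqr_ge0.
(* [2 a S <= m a^2 + Q], from [m (m a^2 + Q - 2 a S) >= (m a - S)^2] *)
have cross : 0 <= (size s)%:R * (F a) ^+ 2 + Q - 2 * F a * S.
  rewrite -(pmulr_rge0 _ m_gt0).
  have := sqr_ge0 ((size s)%:R * F a - S); nra.
nra.
Qed.

Lemma ler_sum_uniq_subset (I : finType) (s : seq I) (A : {pred I}) (F : I -> R) :
  uniq s -> {subset s <= A} -> {in A, forall i, 0 <= F i} ->
  \sum_(i <- s) F i <= \sum_(i in A) F i.
Proof.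
move=> s_uniq sA F_ge0; rewrite big_uniq // [leRHS](bigID (mem s)) /=.
have -> : \sum_(i in A | i \in s) F i = \sum_(i in s) F i.
  by apply: eq_bigl => i; case: (boolP (i \in s)) => [/sA ->|]; rewrite ?andbF.
by rewrite lerDl sumr_ge0 // => i /andP [/F_ge0].
Qed.

Lemma sumr_le_pred_card_mul n (j : 'I_n) (F : 'I_n -> R) (M : R) :
  F j = 0 -> (forall i, F i <= M) -> \sum_i F i <= (n%:R - 1) * M.
Proof.
move=> Fj F_le; rewrite (bigD1 j) //= Fj add0r.
apply: le_trans (ler_sum _ (fun i _ => F_le i)) _.
rewrite sumr_const cardC1 card_ord -[leLHS]mulr_natl -subn1 natrB //.
exact: leq_ltn_trans (leq0n j) (ltn_ord j).
Qed.

Lemma one_le_mul_mono (c d a b : R) :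
  0 <= c <= d -> a <= b -> 1 <= c * a -> 1 <= d * b.
Proof.
move=> /andP [c_ge0 cd] ab ca.
have a_gt0 : 0 < a.
  rewrite ltNge; apply: contraTN ca => a_le0.
  by rewrite -ltNge (le_lt_trans (mulr_ge0_le0 c_ge0 a_le0)) ?ltr01.
by apply: (le_trans ca); apply: ler_pM => //; exact: ltW.
Qed.

End RealInequalities.

Lemma AGM_card_mul_le_sum (R : realFieldType) (I : finType) (A : {pred I})
    (F : I -> R) (p : R) :
  0 <= p -> {in A, forall i, 0 <= F i} -> \prod_(i in A) F i = p ^+ #|A| ->
  #|A|%:R * p <= \sum_(i in A) F i.
Proof.
move=> p_ge0 F_ge0 prodF; have S_ge0 : 0 <= \sum_(i in A) F i by exact: sumr_ge0.
have [->|A_gt0] := posnP #|A|; first by rewrite mul0r.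
have := (leif_AGM F_ge0).1; rewrite prodF.
rewrite ler_pXn2r // ?nnegrE ?divr_ge0 // => p_le_mean.
by rewrite mulrC -ler_pdivlMr ?ltr0n.
Qed.

Lemma div_le_of_one_le_mul (R : realFieldType) (K M D a : R) :
  2 <= K -> 0 <= D -> 1 <= M * D * a -> K / (2 * (K - 1) * M * a) <= D.
Proof.
move=> K_ge2 D_ge0 MDa_ge1.
have Ma_gt0 : 0 < M * a.
  rewrite ltNge; apply: contraTN MDa_ge1 => Ma_le0.
  by rewrite -ltNge mulrAC (le_lt_trans (mulr_le0_ge0 Ma_le0 D_ge0)) ?ltr01.
rewrite ler_pdivrMr; last by rewrite -mulrA mulr_gt0 // mulr_gt0 //; lra.
have -> : D * (2 * (K - 1) * M * a) = 2 * (K - 1) * (M * D * a) by ring.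
have : (K - 1) * 1 <= (K - 1) * (M * D * a) by rewrite ler_wpM2l //; lra.
lra.
Qed.

Section InfSup.
Variable R : realType.

Lemma one_le_mul_inf (S : set R) (c : R) :
  (S !=set0)%classic -> 0 <= c -> (forall z, S z -> 1 <= c * z) ->
  1 <= c * inf S.
Proof.
move=> [z0 Sz0] c_ge0 cS.
have c_gt0 : 0 < c.
  rewrite lt_def c_ge0 andbT; apply: contraTN (cS z0 Sz0) => /eqP ->.
  by rewrite mul0r ler10.
rewrite -ler_pdivrMl // mulr1; apply: lb_le_inf; first by exists z0.
by move=> z Sz; rewrite -[c^-1]mulr1 ler_pdivrMl // cS.
Qed.

Lemma has_ubound_range_fin (I : finType) (f : I -> R) : has_ubound (range f).
Proof. by exists (\big[Num.max/0]_i f i) => _ [i _ <-]; exact: le_bigmax. Qed.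

End InfSup.

Section EdgeTerm.
Variables (R : rcfType) (I : finType) (k : nat) (x : I -> R).
Hypothesis x_ge0 : forall i, 0 <= x i.

Definition edge_term (e : {set I}) : R :=
  \sum_(i in e) x i ^+ k - k%:R * \prod_(i in e) x i.

Lemma edge_term_ge0 (e : {set I}) : #|e| = k -> 0 <= edge_term e.
Proof.
move=> card_e; rewrite subr_ge0 -{1}card_e; apply: AGM_card_mul_le_sum.
- exact: prodr_ge0.
- by move=> i _; rewrite exprn_ge0.
- by rewrite card_e prodrXl.
Qed.

(* AGM for the [k] numbers obtained from the [x i ^+ k] by replacing both
   [x u ^+ k] and [x v ^+ k] by their geometric mean: the product is unchanged
   and the sum drops by exactly the square on the left. *)
Lemma edge_term_ge_sqr_diff (e : {set I}) u v :
  #|e| = k -> u \in e -> v \in e -> u != v ->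
  (Num.sqrt (x u ^+ k) - Num.sqrt (x v ^+ k)) ^+ 2 <= edge_term e.
Proof.
move=> card_e ue ve uv.
set yu := Num.sqrt (x u ^+ k); set yv := Num.sqrt (x v ^+ k).
have yu2 : yu ^+ 2 = x u ^+ k by rewrite sqr_sqrtr // exprn_ge0.
have yv2 : yv ^+ 2 = x v ^+ k by rewrite sqr_sqrtr // exprn_ge0.
pose F i := if (i == u) || (i == v) then yu * yv else x i ^+ k.
have split_uv (idx : R) (op : Monoid.com_law idx) (G : I -> R) :
    \big[op/idx]_(i in e) G i =
    op (G u) (op (G v) (\big[op/idx]_(i in e | (i != u) && (i != v)) G i)).
  rewrite (bigD1 u) //= (bigD1 v) /= ?ve 1?eq_sym //.
  by congr (op _ (op _ _)); apply: eq_bigl => i; rewrite andbA.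
have F_rest_sum : \big[+%R/0]_(i in e | (i != u) && (i != v)) F i =
                  \sum_(i in e | (i != u) && (i != v)) x i ^+ k.
  by apply: eq_bigr => i /andP [_ /andP [/negbTE uF /negbTE vF]]; rewrite /F uF vF.
have F_rest_prod : \big[*%R/1]_(i in e | (i != u) && (i != v)) F i =
                   \prod_(i in e | (i != u) && (i != v)) x i ^+ k.
  by apply: eq_bigr => i /andP [_ /andP [/negbTE uF /negbTE vF]]; rewrite /F uF vF.
have prodF : \prod_(i in e) F i = (\prod_(i in e) x i) ^+ #|e|.
  rewrite card_e -prodrXl !split_uv F_rest_prod /F !eqxx /= orbT.
  by rewrite mulrA mulrACA -!expr2 yu2 yv2 !mulrA.
have sumF : \sum_(i in e) F i = \sum_(i in e) x i ^+ k - (yu - yv) ^+ 2.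
  rewrite !split_uv F_rest_sum /F !eqxx /= orbT -yu2 -yv2; ring.
have prod_ge0 : 0 <= \prod_(i in e) x i by exact: prodr_ge0.
have F_ge0 : {in e, forall i, 0 <= F i}.
  by move=> i _; rewrite /F; case: ifP; rewrite ?mulr_ge0 ?sqrtr_ge0 ?exprn_ge0.
have := AGM_card_mul_le_sum prod_ge0 F_ge0 prodF.
rewrite card_e sumF /edge_term; lra.
Qed.

End EdgeTerm.

Section Hypergraph.
Variables (n k : nat) (E : {set {set 'I_n}}).

Lemma has_path_hdist u v : connected_hg E -> has_path E u v (hdist E u v).
Proof.
move=> E_conn; rewrite /hdist; case: pselect => [ex_path | no_path].
  by case: ex_minnP => l /asboolP.
by have [l ?] := E_conn u v; case: no_path; exists l; apply/asboolP.
Qed.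

Lemma hg_rad_ecc (v0 : 'I_n) : exists j, hg_rad E = ecc E j.
Proof.
have ecc_le_diam j : (ecc E j <= hg_diam E)%N by apply: leq_bigmax.
rewrite /hg_rad -minEnat.
by have [j _ ->] := eq_bigmin v0 predT (ecc E) isT (fun i _ => ecc_le_diam i); exists j.
Qed.

Variable R : realType.
Hypothesis E_unif : k_uniform k E.

Lemma lapl_form_ge0 (x : 'I_n -> R) :
  (forall i, 0 <= x i) -> 0 <= lapl_form k E x.
Proof.
by move=> x_ge0; apply: sumr_ge0 => e eE; apply: edge_term_ge0 => //; apply: E_unif.
Qed.

Lemma path_sqr_diff_le (x : 'I_n -> R) u v l vs es :
  (forall i, 0 <= x i) -> is_path E u v l vs es ->
  (Num.sqrt (x v ^+ k) - Num.sqrt (x u ^+ k)) ^+ 2 <= l%:R * lapl_form k E x.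
Proof.
move=> x_ge0 [[size_es size_vs uniq_vs uniq_es] [es_in_E head_vs last_vs adj]].
pose y i := Num.sqrt (x (nth u vs i) ^+ k).
have -> : Num.sqrt (x v ^+ k) - Num.sqrt (x u ^+ k) = \sum_(0 <= i < l) (y i.+1 - y i).
  have nth_l : nth u vs l = v by rewrite -last_vs -nth_last size_vs.
  by rewrite telescope_sumr // /y nth0 head_vs nth_l.
apply: le_trans (sqr_sum_le_size_mul _ _) _; rewrite size_iota subn0.
apply: ler_wpM2l => //.
have step i : (i < l)%N -> (y i.+1 - y i) ^+ 2 <= edge_term k x (nth finset.set0 es i).
  move=> il; have [in_i in_Si] := adj i il.
  apply: edge_term_ge_sqr_diff => //.
  - by apply: E_unif; apply: (allP es_in_E); rewrite mem_nth ?size_es.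
  - by rewrite nth_uniq ?size_vs ?ltnS ?(ltnW il) // (gtn_eqF (ltnSn i)).
apply: le_trans (_ : \sum_(e <- es) edge_term k x e <= _).
  rewrite (big_nth finset.set0) size_es.
  by apply: ler_sum_nat => i /andP [_ /step].
apply: ler_sum_uniq_subset => //; first exact/allP.
by move=> e eE; apply: edge_term_ge0 => //; apply: E_unif.
Qed.

Hypothesis k_gt0 : (0 < k)%N.

Lemma one_le_ecc_mul_lapl_form (x : 'I_n -> R) j :
  connected_hg E -> (forall i, 0 <= x i) -> \sum_(i < n) x i ^+ k = 1 -> x j = 0 ->
  1 <= (n%:R - 1) * (ecc E j)%:R * lapl_form k E x.
Proof.
move=> E_conn x_ge0 x_norm xj0.
have xj0k : x j ^+ k = 0 by rewrite xj0 expr0n gtn_eqF.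
have [u _ u_max] := arg_maxP (fun i => x i ^+ k) (isT : predT j).
have n_ge1 : 1 <= n%:R :> R by rewrite ler1n (leq_ltn_trans _ (ltn_ord j)).
have norm_le : 1 <= (n%:R - 1) * x u ^+ k.
  by rewrite -[leLHS]x_norm; apply: (sumr_le_pred_card_mul xj0k) => i; apply: u_max.
have [vs [es path_uj]] := has_path_hdist u j E_conn.
have := path_sqr_diff_le x_ge0 path_uj.
rewrite xj0k sqrtr0 sub0r sqrrN sqr_sqrtr ?exprn_ge0 // => xu_le.
apply: (le_trans norm_le); rewrite -mulrA ler_wpM2l ?subr_ge0 //.
apply: (le_trans xu_le); rewrite ler_wpM2r ?lapl_form_ge0 // ler_nat.
exact: leq_bigmax.
Qed.

Lemma exists_unit_vector_vanishing_at (j : 'I_n) : (1 < n)%N ->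
  exists x : 'I_n -> R,
    (forall i, 0 <= x i) /\ \sum_(i < n) x i ^+ k = 1 /\ x j = 0.
Proof.
move=> n_gt1; have : (0 < #|predC1 j|)%N.
  by rewrite cardC1 card_ord -ltnS prednK // (ltnW n_gt1).
case/card_gt0P => u; rewrite !inE => uj.
exists (fun i => (i == u)%:R); split; first by move=> i; rewrite ler0n.
split; last by rewrite eq_sym (negbTE uj).
rewrite (bigD1 u) //= eqxx expr1n big1 ?addr0 // => i /negbTE ->.
by rewrite expr0n gtn_eqF.
Qed.

Lemma one_le_ecc_mul_alpha_j j : (1 < n)%N -> connected_hg E ->
  1 <= (n%:R - 1) * (ecc E j)%:R * alpha_j R k E j.
Proof.
move=> n_gt1 E_conn; apply: one_le_mul_inf.
- have [x x_feasible] := exists_unit_vector_vanishing_at j n_gt1.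
  by exists (lapl_form k E x), x.
- by rewrite mulr_ge0 // subr_ge0 ler1n ltnW.
- by move=> _ [x [x_ge0 [x_norm xj0]] <-]; apply: one_le_ecc_mul_lapl_form.
Qed.

End Hypergraph.

Theorem corollary3p5 (R : realType) (n k : nat) (E : {set {set 'I_n}}) :
  (2 <= k)%N -> k_uniform k E -> connected_hg E ->
  (hg_diam E)%:R >= k%:R / (2 * (k%:R - 1) * (n%:R - 1) * alpha_hg R k E) :> R /\
  (hg_rad E)%:R >= k%:R / (2 * (k%:R - 1) * (n%:R - 1) * beta_hg R k E) :> R.
Proof.
move=> k_ge2 E_unif E_conn.
have k_gt0 : (0 < k)%N by apply: leq_trans k_ge2.
have K_ge2 : 2 <= k%:R :> R by rewrite ler_nat.
case: n E E_unif E_conn => [|[|n]] E E_unif E_conn.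
- rewrite /alpha_hg /beta_hg.
  have -> : range (alpha_j R k E) = set0 by apply/seteqP; split => // z [[]].
  by rewrite inf0 sup0 !mulr0 invr0 !mulr0.
- by rewrite subrr !mulr0 !mul0r invr0 !mulr0.
have key j := one_le_ecc_mul_alpha_j R E_unif k_gt0 j (isT : (1 < n.+2)%N) E_conn.
have n1_ge0 : 0 <= n.+2%:R - 1 :> R by rewrite subr_ge0 ler1n.
split; apply: div_le_of_one_le_mul => //.
- apply: one_le_mul_inf => [||_ [j _ <-]].
  + by exists (alpha_j R k E ord0), ord0.
  + by rewrite mulr_ge0.
  + apply: one_le_mul_mono (key j) => //.
    by rewrite mulr_ge0 //= ler_wpM2l // ler_nat; apply: leq_bigmax.
- have [j0 ->] := hg_rad_ecc E ord0.
  apply: one_le_mul_mono (key j0); first by rewrite mulr_ge0 //=.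
  by apply: ub_le_sup; [exact: has_ubound_range_fin | exists j0].
Qed.
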